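(* Let $s$ be a Sturmian word and let $w$ be a non-empty factor of $s$. If $w$ is right special, then $r_s(w)$ equals the first letter of $w$. If $w$ is left special, then $r_s(w)$ equals the last letter of $w$.
   Context: A Sturmian word is an infinite word $s\in\{a,b\}^{\omega}$ that is aperiodic (not ultimately periodic) and balanced: for all factors $u,v$ of $s$ with $|u|=|v|$ one has $||u|_x-|v|_x|\le 1$ for $x\in\{a,b\}$, where $|u|_x$ is the number of occurrences of the letter $x$ in $u$. $\mathcal F^+ s$ denotes the set of non-empty factors of $s$. A non-empty factor $w$ of $s$ is rich in the letter $z\in\{a,b\}$ if there is a factor $v$ of $s$ with $|v|=|w|$ and $|w|_z>|v|_z$; every non-empty factor of a Sturmian word is rich in exactly one of the letters $a,b$, and $r_s:\mathcal F^+ s\to\{a,b\}$ maps $w$ to the letter in which $w$ is rich. A factor $u$ is right special (resp. left special) if there are distinct letters $x,y$ with $ux,uy$ (resp. $xu,yu$) factors of $s$. *)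

From HB Require Import structures.
From mathcomp Require Import all_boot.
Set Implicit Arguments. Unset Strict Implicit. Unset Printing Implicit Defensive.

Inductive letter := a | b.

Definition letter_eqb (x y : letter) : bool :=
  match x, y with a, a | b, b => true | _, _ => false end.
Lemma letter_eqP : Equality.axiom letter_eqb.
Proof. by case; case; constructor. Qed.
HB.instance Definition _ := hasDecEq.Build letter letter_eqP.

Definition infword := nat -> letter.

Definition factor (s : infword) (u : seq letter) : Prop :=
  exists i, u = mkseq (fun j => s (i + j)) (size u).

Definition occ (x : letter) (u : seq letter) : nat := count_mem x u.

Definition balanced (s : infword) : Prop :=
  forall u v, factor s u -> factor s v -> size u = size v ->
    forall x, occ x u <= occ x v + 1 /\ occ x v <= occ x u + 1.

Definition ultimately_periodic (s : infword) : Prop :=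
  exists p n0, 0 < p /\ forall n, n0 <= n -> s (n + p) = s n.

Definition sturmian (s : infword) : Prop :=
  ~ ultimately_periodic s /\ balanced s.

Definition rich (s : infword) (w : seq letter) (z : letter) : Prop :=
  exists v, factor s v /\ size v = size w /\ occ z v < occ z w.

Definition right_special (s : infword) (u : seq letter) : Prop :=
  exists x y, x <> y /\ factor s (rcons u x) /\ factor s (rcons u y).

Definition left_special (s : infword) (u : seq letter) : Prop :=
  exists x y, x <> y /\ factor s (x :: u) /\ factor s (y :: u).

From mathcomp Require Import all_boot.
From mathcomp Require Import zify.

(* Key fact (rich_iff_of_deficit): in a balanced word, if w has a factor v of
   the same length containing exactly one occurrence of c fewer than w, then
   w is rich in c and in no other letter -- a factor v' richer than w in the
   other letter would have two c's fewer than v, contradicting balance.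
   For a right special w = c u, the factor u d with d <> c (one of the two
   extensions of w, minus its first letter) is such a v; symmetrically, for a
   left special w = u c the factor d u with d <> c is such a v. *)

Lemma factorP (s : infword) (u : seq letter) :
  factor s u <-> exists i, forall j, j < size u -> nth a u j = s (i + j).
Proof.
split=> [[i ->]|[i Hu]]; exists i.
  by move=> j; rewrite size_mkseq => lt_j; rewrite nth_mkseq.
apply: (@eq_from_nth _ a); rewrite ?size_mkseq // => j lt_j.
by rewrite nth_mkseq // Hu.
Qed.

Lemma factor_prefix (s : infword) (u v : seq letter) :
  factor s (u ++ v) -> factor s u.
Proof.
move/factorP=> [i Huv]; apply/factorP; exists i => j lt_j.
rewrite -Huv ?nth_cat ?lt_j // size_cat; exact: leq_trans lt_j (leq_addr _ _).
Qed.

Lemma factor_suffix (s : infword) (u v : seq letter) :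
  factor s (u ++ v) -> factor s v.
Proof.
move/factorP=> [i Huv]; apply/factorP; exists (i + size u) => j lt_j.
have := Huv (size u + j); rewrite nth_cat size_cat ltn_add2l lt_j.
by rewrite ltnNge leq_addr /= addKn addnA [i + _]addnC; apply.
Qed.

Lemma occ_a_b (u : seq letter) : occ a u + occ b u = size u.
Proof. by elim: u => //= x u IH; case: x; rewrite /occ /= -IH ?addnS ?addSn. Qed.

Lemma occ_rcons_other (c d : letter) (u : seq letter) :
  d <> c -> occ c (rcons u d) = occ c u.
Proof.
move=> ne_dc; rewrite /occ -cats1 count_cat /=.
by case: (d =P c) => [/ne_dc|_]; rewrite !addn0.
Qed.

Lemma occ_cons_other (c d : letter) (u : seq letter) :
  d <> c -> occ c (d :: u) = occ c u.
Proof. by move=> ne_dc; rewrite /occ /=; case: (d =P c). Qed.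

Lemma rich_iff_of_deficit {s : infword} {w v : seq letter} {c : letter} :
  balanced s -> factor s v -> size v = size w -> (occ c v).+1 = occ c w ->
  forall z, rich s w z <-> z = c.
Proof.
move=> bal_s fv size_vw deficit z.
split; last by move->; exists v; rewrite deficit.
move=> [v' [fv' [size_v'w richer]]].
case: (z =P c) => // ne_zc; exfalso.
have [bal_c _] := bal_s v' v fv' fv (etrans size_v'w (esym size_vw)) c.
have count_v' := occ_a_b v'; have count_w := occ_a_b w.
move: ne_zc richer bal_c deficit; rewrite -size_v'w in count_w.
by case: z; case: c => //= _; lia.
Qed.

Lemma other_letter (x y c : letter) :
  x <> y -> exists d, d <> c /\ (d = x \/ d = y).
Proof.
by case: x; case: y; case: c => // _;
  [exists b | exists a | exists b | exists a]; split; auto.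
Qed.

(* A right special factor c :: u is rich in its first letter c: one of its
   two extensions ends with d <> c, so u ++ [d] has one c fewer. *)
Lemma right_special_rich (s : infword) (c : letter) (u : seq letter) :
  balanced s -> right_special s (c :: u) ->
  forall z, rich s (c :: u) z <-> z = c.
Proof.
move=> bal_s [x [y [ne_xy [fx fy]]]].
have [d [ne_dc ext_d]] := other_letter x y c ne_xy.
have fv : factor s (rcons u d).
  by case: ext_d => ->; [move: fx | move: fy];
     rewrite rcons_cons -cat1s; apply: factor_suffix.
apply: (rich_iff_of_deficit bal_s fv); first by rewrite size_rcons.
by rewrite occ_rcons_other // /occ /= eqxx.
Qed.

(* A left special factor rcons u c is rich in its last letter c: one of its
   two extensions starts with d <> c, so d :: u has one c fewer. *)
Lemma left_special_rich (s : infword) (c : letter) (u : seq letter) :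
  balanced s -> left_special s (rcons u c) ->
  forall z, rich s (rcons u c) z <-> z = c.
Proof.
move=> bal_s [x [y [ne_xy [fx fy]]]].
have [d [ne_dc ext_d]] := other_letter x y c ne_xy.
have fv : factor s (d :: u).
  by case: ext_d => ->; [move: fx | move: fy];
     rewrite -rcons_cons -cats1; apply: factor_prefix.
apply: (rich_iff_of_deficit bal_s fv); first by rewrite size_rcons.
by rewrite occ_cons_other // /occ -cats1 count_cat /= eqxx addn1.
Qed.

Theorem mainTheorem1 (s : infword) (w : seq letter) :
  sturmian s -> factor s w -> w <> [::] ->
  (right_special s w -> forall z, rich s w z <-> z = head a w) /\
  (left_special s w -> forall z, rich s w z <-> z = last a w).
Proof.
move=> [_ bal_s] _ nonempty_w; split.
  by case: w nonempty_w => [//|c u] _; exact: right_special_rich.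
case/lastP: w nonempty_w => [//|u c] _; rewrite last_rcons.
exact: left_special_rich.
Qed.
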